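(* Assume (H1), (H2) and the sequence setting (Seq). Let $x\in\mathrm{dom}\,J$, and for each $k$ let $(\bar u_{1,k},\dots,\bar u_{N,k})$ be any minimizer of the Lax problem at the point $(x_k,t_{1,k},\dots,t_{N,k})$. Then: (i) $\lim_{k\to\infty}\bar u_{j,k}=0$ for every $j=1,\dots,N$; (ii) if $\partial J(x)\ne\emptyset$ and $\alpha_{j,\infty}=0$, then $\lim_{k\to\infty}\bar u_{j,k}/t_{1,k}=0$; (iii) if $\partial J(x)\ne\emptyset$ and $\alpha_{j,\infty}\ne0$, then the sequence $(\bar u_{j,k}/t_{j,k})_k$ is bounded.
   Context: Hypothesis (H1): each $H_j:\mathbb{R}^n\to\mathbb{R}$ ($j=1,\dots,N$) is finite-valued, convex and 1-coercive (i.e. $H_j(p)/\|p\|\to+\infty$ as $\|p\|\to\infty$), and at least one $H_j$ is strictly convex. Hypothesis (H2): $J:\mathbb{R}^n\to\mathbb{R}\cup\{+\infty\}$ is proper, convex and lower semicontinuous. $H_j^*$ is the Legendre transform of $H_j$. The Lax problem at $(y,t_1,\dots,t_N)$ with all $t_j>0$ is: minimize $J(y-\sum_{j=1}^N u_j)+\sum_{j=1}^N t_jH_j^*(u_j/t_j)$ over $u_1,\dots,u_N\in\mathbb{R}^n$ (minimizers exist under (H1)-(H2)). Sequence setting (Seq): $x\in\mathbb{R}^n$; for each $j\in\{1,\dots,N\}$ and $k\in\mathbb{N}$, $t_{j,k}>0$ and $v_{j,k}\in\mathbb{R}^n$, with $t_{j,k}\to0$, $v_{j,k}\to v_{j,\infty}\in\mathbb{R}^n$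 and $t_{j,k}/t_{1,k}\to\alpha_{j,\infty}\in\mathbb{R}$ as $k\to\infty$; and $x_k=x+\sum_{j=1}^N t_{j,k}v_{j,k}$. *)

From mathcomp Require Import ssreflect ssrbool ssrfun eqtype ssrnat seq fintype bigop.
From Stdlib Require Import Reals ClassicalEpsilon.
Set Implicit Arguments.
Unset Strict Implicit.
Local Open Scope R_scope.

Definition vec (n : nat) := 'I_n -> R.
Definition vzero {n} : vec n := fun _ => 0.
Definition vadd {n} (u v : vec n) : vec n := fun i => u i + v i.
Definition vsub {n} (u v : vec n) : vec n := fun i => u i - v i.
Definition vscale {n} (a : R) (u : vec n) : vec n := fun i => a * u i.
Definition dot {n} (u v : vec n) : R := \big[Rplus/0]_(i < n) (u i * v i).
Definition vnorm {n} (u : vec n) : R := sqrt (dot u u).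
Definition vsum {n m} (F : 'I_m -> vec n) : vec n :=
  fun i => \big[Rplus/0]_(j < m) (F j i).

Definition vec_cv {n} (s : nat -> vec n) (l : vec n) : Prop :=
  Un_cv (fun k => vnorm (vsub (s k) l)) 0.
Definition vec_bounded {n} (s : nat -> vec n) : Prop :=
  exists M : R, forall k, vnorm (s k) <= M.

(* Extended reals R ∪ {+oo}: None = +oo. *)
Definition ereal := option R.
Definition eadd (a b : ereal) : ereal :=
  match a, b with Some x, Some y => Some (x + y) | _, _ => None end.
Definition ele (a b : ereal) : Prop :=
  match a, b with
  | _, None => True
  | None, Some _ => False
  | Some x, Some y => x <= y
  end.
Definition escale (t : R) (a : ereal) : ereal :=
  match a with Some x => Some (t * x) | None => None end.
Definition esum {m} (F : 'I_m -> ereal) : ereal := \big[eadd/Some 0]_(j < m) F j.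

Definition convex_fun {n} (H : vec n -> R) : Prop :=
  forall (x y : vec n) (l : R), 0 <= l <= 1 ->
    H (vadd (vscale l x) (vscale (1 - l) y)) <= l * H x + (1 - l) * H y.
Definition strictly_convex_fun {n} (H : vec n -> R) : Prop :=
  forall (x y : vec n) (l : R), x <> y -> 0 < l < 1 ->
    H (vadd (vscale l x) (vscale (1 - l) y)) < l * H x + (1 - l) * H y.
(* 1-coercive: H(p)/||p|| -> +oo as ||p|| -> oo *)
Definition one_coercive {n} (H : vec n -> R) : Prop :=
  forall M : R, exists r : R, forall p : vec n, r <= vnorm p -> M * vnorm p <= H p.

Definition proper_fun {n} (J : vec n -> ereal) : Prop := exists x, J x <> None.
Definition convex_efun {n} (J : vec n -> ereal) : Prop :=
  forall (x y : vec n) (l : R), 0 <= l <= 1 ->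
    ele (J (vadd (vscale l x) (vscale (1 - l) y)))
        (eadd (escale l (J x)) (escale (1 - l) (J y))).
Definition lsc_efun {n} (J : vec n -> ereal) : Prop :=
  forall (x : vec n) (c : R), ~ ele (J x) (Some c) ->
    exists d : R, 0 < d /\ forall y, vnorm (vsub y x) < d -> ~ ele (J y) (Some c).

Definition dom {n} (J : vec n -> ereal) (x : vec n) : Prop := J x <> None.

Definition subgrad {n} (J : vec n -> ereal) (x p : vec n) : Prop :=
  exists jx : R, J x = Some jx /\
    forall y, ele (Some (jx + dot p (vsub y x))) (J y).
Definition subdiff_nonempty {n} (J : vec n -> ereal) (x : vec n) : Prop :=
  exists p, subgrad J x p.

(* Legendre transform H^*(v) = sup_p (<v,p> - H p), as an extended real *)
Definition legendre_set {n} (H : vec n -> R) (v : vec n) : R -> Prop :=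
  fun r => exists p : vec n, r = dot v p - H p.
Lemma legendre_set_ne {n} (H : vec n -> R) (v : vec n) :
  exists r, legendre_set H v r.
Proof. exists (dot v vzero - H vzero); exists vzero; reflexivity. Qed.
Definition legendre {n} (H : vec n -> R) (v : vec n) : ereal :=
  match excluded_middle_informative (bound (legendre_set H v)) with
  | left hb => Some (proj1_sig (completeness _ hb (legendre_set_ne H v)))
  | right _ => None
  end.

Definition lax_obj {n m} (J : vec n -> ereal) (H : 'I_m -> vec n -> R)
  (y : vec n) (t : 'I_m -> R) (u : 'I_m -> vec n) : ereal :=
  eadd (J (vsub y (vsum u)))
       (esum (fun j => escale (t j) (legendre (H j) (vscale (/ t j) (u j))))).
Definition lax_minimizer {n m} (J : vec n -> ereal) (H : 'I_m -> vec n -> R)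
  (y : vec n) (t : 'I_m -> R) (u : 'I_m -> vec n) : Prop :=
  forall w : 'I_m -> vec n, ele (lax_obj J H y t u) (lax_obj J H y t w).

(* The whole proof rests on one a priori estimate. Comparing the minimizer
   u_k with the competitor w_i = t_i v_i (which satisfies x_k - sum w_i = x)
   and combining
   - an affine-in-distance minorant J(y) >= J(x) - A - L |y - x| (from
     lower semicontinuity and convexity, or with A = 0 from a subgradient),
   - the superlinear growth H_i^*(w) >= M |w| - sup_{|p| <= M} H_i of the
     Legendre transforms (convex finite H_i are bounded on balls),
   - the boundedness of H_i^* on bounded sets (1-coercivity),
   yields  sum_i (M_i - L) |u_{i,k}| <= A + sum_i t_{i,k} (E_i + B_i(M_i)).
   Choosing M_j = L + K and M_i = L otherwise isolates |u_{j,k}|; letting K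
   grow gives (i) and, after division by t_{1,k}, (ii); K = 1 gives (iii). *)

From HB Require Import structures.
From mathcomp Require Import ssreflect ssrbool ssrfun eqtype ssrnat seq fintype bigop.
From Stdlib Require Import Reals Lra Psatz FunctionalExtensionality ClassicalEpsilon.
Local Open Scope R_scope.
Set Implicit Arguments.
Unset Strict Implicit.

Set Warnings "-redundant-canonical-projection".

(* Real addition and multiplication as bigop laws, so that the generic
   theory of \big (splitting, distributivity, ...) applies to \big[Rplus/0]. *)
Lemma RplusA : associative Rplus. Proof. by move=> x y z; ring. Qed.
HB.instance Definition _ :=
  Monoid.isComLaw.Build R 0 Rplus RplusA Rplus_comm Rplus_0_l.
HB.instance Definition _ :=
  Monoid.isMulLaw.Build R 0 Rmult Rmult_0_l Rmult_0_r.
HB.instance Definition _ :=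
  Monoid.isAddLaw.Build R Rmult Rplus Rmult_plus_distr_r Rmult_plus_distr_l.

Notation "\rsum_ ( i < m ) F" := (\big[Rplus/0]_(i < m) F)
  (at level 41, F at level 41, i, m at level 50).

Lemma rsum_le m (F G : 'I_m -> R) :
  (forall i, F i <= G i) -> \rsum_(i < m) F i <= \rsum_(i < m) G i.
Proof. by move=> FG; apply: (big_ind2 (fun a b => a <= b)) => // *; lra. Qed.

Lemma rsum_ge0 m (F : 'I_m -> R) : (forall i, 0 <= F i) -> 0 <= \rsum_(i < m) F i.
Proof. by move=> F0; apply: (big_ind (fun a => 0 <= a)) => // *; lra. Qed.

Lemma rsum_term_le m (F : 'I_m -> R) j :
  (forall i, 0 <= F i) -> F j <= \rsum_(i < m) F i.
Proof.
move=> F0; rewrite (bigD1 j) //= -[X in X <= _]Rplus_0_r.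
apply: Rplus_le_compat_l.
by apply: (big_ind (fun a => 0 <= a)) => [|a b|i _]; [lra|lra|apply: F0].
Qed.

Lemma rsum_sub m (F G : 'I_m -> R) :
  \rsum_(i < m) (F i - G i) = \rsum_(i < m) F i - \rsum_(i < m) G i.
Proof.
rewrite (eq_bigr (fun i => F i + (-1) * G i)); last by move=> i _; ring.
by rewrite big_split /= -big_distrr /=; ring.
Qed.

Lemma rsum_cv m (f : 'I_m -> nat -> R) (l : 'I_m -> R) :
  (forall i, Un_cv (f i) (l i)) ->
  Un_cv (fun k => \rsum_(i < m) f i k) (\rsum_(i < m) l i).
Proof.
elim: m f l => [|m IH] f l fl.
  rewrite big_ord0 => e e0; exists 0%nat => k _.
  by rewrite big_ord0 /Rdist Rminus_0_r Rabs_R0.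
rewrite big_ord_recr /=.
have -> : (fun k => \rsum_(i < m.+1) f i k) =
  (fun k => \rsum_(i < m) f (widen_ord (leqnSn m) i) k + f ord_max k).
  by apply: functional_extensionality => k; rewrite big_ord_recr.
by apply: CV_plus; [apply: IH => i | ]; apply: fl.
Qed.

Lemma cv_const c : Un_cv (fun _ => c) c.
Proof. by move=> e e0; exists 0%nat => k _; rewrite /Rdist Rminus_diag_eq // Rabs_R0. Qed.

Lemma dot_sym n (u v : vec n) : dot u v = dot v u.
Proof. by apply: eq_bigr => i _; ring. Qed.

Lemma dot_scale n a (u v : vec n) : dot (vscale a u) v = a * dot u v.
Proof. by rewrite /dot big_distrr; apply: eq_bigr => i _; rewrite /vscale /=; ring. Qed.

Lemma dot_scaler n a (u v : vec n) : dot u (vscale a v) = a * dot u v.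
Proof. by rewrite dot_sym dot_scale dot_sym. Qed.

Lemma dot_zeror n (u : vec n) : dot u vzero = 0.
Proof. by rewrite /dot big1 // => i _; rewrite /vzero; ring. Qed.

Lemma dot_ge0 n (u : vec n) : 0 <= dot u u.
Proof. by apply: rsum_ge0 => i; nra. Qed.

Lemma vnorm_ge0 n (u : vec n) : 0 <= vnorm u.
Proof. exact: sqrt_pos. Qed.

Lemma vnorm_sq n (u : vec n) : vnorm u * vnorm u = dot u u.
Proof. by rewrite sqrt_sqrt //; apply: dot_ge0. Qed.

Lemma dot_comb n a b (u v : vec n) :
  dot (vadd (vscale a u) (vscale b v)) (vadd (vscale a u) (vscale b v)) =
  a * a * dot u u + 2 * a * b * dot u v + b * b * dot v v.
Proof.
rewrite /dot !big_distrr -!big_split; apply: eq_bigr => i _.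
by rewrite /vadd /vscale /=; ring.
Qed.

Lemma coord_le n (u : vec n) i : Rabs (u i) <= vnorm u.
Proof.
rewrite -sqrt_Rsqr_abs /Rsqr; apply: sqrt_le_1_alt.
by apply: (rsum_term_le (F := fun i => u i * u i)) => j; nra.
Qed.

Lemma dot_norm0 n (u v : vec n) : vnorm u = 0 -> dot u v = 0.
Proof.
move=> u0; rewrite /dot big1 // => i _.
have ui_le0 : Rabs (u i) <= 0 by rewrite -u0; apply: coord_le.
have ui0 : u i = 0.
  by have := Rle_abs (u i); have := Rle_abs (- u i); rewrite Rabs_Ropp; lra.
by rewrite ui0; ring.
Qed.

(* Cauchy-Schwarz, from the nonnegativity of |v| u - |u| v squared. *)
Lemma dot_le n (u v : vec n) : dot u v <= vnorm u * vnorm v.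
Proof.
have [u0|u_pos] := Req_dec (vnorm u) 0; first by rewrite dot_norm0 u0; lra.
have [v0|v_pos] := Req_dec (vnorm v) 0.
  by rewrite dot_sym dot_norm0 v0; lra.
have := dot_ge0 (vadd (vscale (vnorm v) u) (vscale (- vnorm u) v)).
rewrite dot_comb -!vnorm_sq.
have := vnorm_ge0 u; have := vnorm_ge0 v => v_ge0 u_ge0.
have : 0 < vnorm u * vnorm v by apply: Rmult_lt_0_compat; lra.
nra.
Qed.

Lemma vnorm_add n (u v : vec n) : vnorm (vadd u v) <= vnorm u + vnorm v.
Proof.
have uv : vadd u v = vadd (vscale 1 u) (vscale 1 v).
  by apply: functional_extensionality => i; rewrite /vadd /vscale; ring.
have := dot_le u v; have := vnorm_ge0 u; have := vnorm_ge0 v => ? ? ?.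
rewrite {1}/vnorm uv dot_comb -(sqrt_square (vnorm u + vnorm v)); last lra.
by apply: sqrt_le_1_alt; rewrite -!vnorm_sq; nra.
Qed.

Lemma vnorm_scale n a (u : vec n) : vnorm (vscale a u) = Rabs a * vnorm u.
Proof.
rewrite /vnorm dot_scale dot_scaler -Rmult_assoc sqrt_mult_alt; last nra.
by rewrite -sqrt_Rsqr_abs.
Qed.

Lemma vnorm_zero n : vnorm (@vzero n) = 0.
Proof. by rewrite /vnorm dot_zeror sqrt_0. Qed.

Lemma vnorm_sub n (u v : vec n) : vnorm (vsub u v) <= vnorm u + vnorm v.
Proof.
have -> : vsub u v = vadd u (vscale (-1) v).
  by apply: functional_extensionality => i; rewrite /vsub /vadd /vscale; ring.
by apply: Rle_trans (vnorm_add _ _) _; rewrite vnorm_scale Rabs_Ropp Rabs_R1; lra.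
Qed.

Lemma vsub_zero n (u : vec n) : vsub u vzero = u.
Proof. by apply: functional_extensionality => i; rewrite /vsub /vzero; ring. Qed.

Lemma vsum_norm n m (F : 'I_m -> vec n) :
  vnorm (vsum F) <= \rsum_(j < m) vnorm (F j).
Proof.
elim: m F => [|m IH] F.
  have -> : vsum F = vzero.
    by apply: functional_extensionality => i; rewrite /vsum big_ord0.
  by rewrite big_ord0 vnorm_zero; lra.
have -> : vsum F = vadd (vsum (fun j => F (widen_ord (leqnSn m) j))) (F ord_max).
  by apply: functional_extensionality => i; rewrite /vsum /vadd big_ord_recr.
rewrite big_ord_recr /=; apply: Rle_trans (vnorm_add _ _) _.
by apply: Rplus_le_compat_r; apply: IH.
Qed.

Lemma vec_cv_bounded n (s : nat -> vec n) l : vec_cv s l -> vec_bounded s.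
Proof.
move=> sl; have [b [_ bound]] := maj_by_pos _ (exist _ 0 sl).
exists (b + vnorm l) => k.
have -> : s k = vadd (vsub (s k) l) l.
  by apply: functional_extensionality => c; rewrite /vadd /vsub; ring.
apply: Rle_trans (vnorm_add _ _) _.
by have := bound k; have := Rle_abs (vnorm (vsub (s k) l)); lra.
Qed.

Section ConvexFunction.
Variables (n : nat) (H : vec n -> R).
Hypothesis H_conv : convex_fun H.

Lemma convex_segment_bound (e : vec n) a s : 0 < a -> Rabs s <= a ->
  H (vscale s e) <= Rmax (H (vscale a e)) (H (vscale (- a) e)).
Proof.
move=> a_pos s_le.
have := Rle_abs s; have := Rle_abs (- s); rewrite Rabs_Ropp => s_lo s_hi.
set l := (s + a) / (2 * a).
have l01 : 0 <= l <= 1.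
  rewrite /l; split; first by apply: Rmult_le_pos; [lra | apply/Rlt_le/Rinv_0_lt_compat; lra].
  by apply: (Rmult_le_reg_r (2 * a)); [lra | rewrite /Rdiv Rmult_assoc Rinv_l; lra].
have -> : vscale s e = vadd (vscale l (vscale a e)) (vscale (1 - l) (vscale (- a) e)).
  by apply: functional_extensionality => i; rewrite /vadd /vscale /l; field; lra.
apply: Rle_trans (H_conv _ _ l01) _.
have := Rmax_l (H (vscale a e)) (H (vscale (- a) e)).
have := Rmax_r (H (vscale a e)) (H (vscale (- a) e)).
nra.
Qed.

(* H is bounded above on cubes, by induction on the number k of coordinates
   that may be nonzero: a vector supported on the first k+1 coordinates is
   the midpoint of twice its truncation to the first k coordinates and twice
   its k-th coordinate part, which lies on a segment. *)
Lemma convex_cube_bound (k : nat) rho : exists B, forall p : vec n,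
  (forall i, Rabs (p i) <= rho) -> (forall i : 'I_n, leq k i -> p i = 0) ->
  H p <= B.
Proof.
elim: k rho => [|k IH] rho.
  exists (H vzero) => p _ p0.
  have -> : p = vzero by apply: functional_extensionality => i; apply: p0.
  exact: Rle_refl.
have [kn|nk] := ltnP k n; last first.
  have [B HB] := IH rho; exists B => p p_rho p0; apply: HB => // i ki.
  by move: (leq_trans nk ki); rewrite leqNgt ltn_ord.
have [B HB] := IH (2 * rho).
set e : vec n := fun i => if nat_of_ord i == k then 1 else 0.
set a := 2 * Rabs rho + 1.
have a_pos : 0 < a by have := Rabs_pos rho; rewrite /a; lra.
exists (/2 * B + (1 - /2) * Rmax (H (vscale a e)) (H (vscale (- a) e))).
move=> p p_rho p0.
set q : vec n := fun i => if leq i.+1 k then p i else 0.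
set pk := p (Ordinal kn).
have half : 0 <= /2 <= 1 by lra.
have -> : p = vadd (vscale (/2) (vscale 2 q)) (vscale (1 - /2) (vscale (2 * pk) e)).
  apply: functional_extensionality => i; rewrite /vadd /vscale /q /e /pk.
  case: ltngtP => ik; first by field.
    by rewrite p0 //; field.
  have -> : i = Ordinal kn by apply: val_inj.
  field.
apply: Rle_trans (H_conv _ _ half) _.
apply: Rplus_le_compat; apply: Rmult_le_compat_l; try lra.
  apply: HB => i; rewrite /vscale /q; last by move=> ki; rewrite ltnNge ki /=; ring.
  case: (leq i.+1 k); last by rewrite Rmult_0_r Rabs_R0; have := p_rho i; have := Rabs_pos (p i); lra.
  by rewrite Rabs_mult Rabs_pos_eq; [have := p_rho i; lra | lra].
apply: convex_segment_bound => //.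
rewrite Rabs_mult (Rabs_pos_eq 2); last lra.
by have := p_rho (Ordinal kn); have := Rle_abs rho; rewrite /pk /a; lra.
Qed.

Lemma convex_ball_bound r : exists B, forall p, vnorm p <= r -> H p <= B.
Proof.
have [B HB] := convex_cube_bound n r.
exists B => p p_r; apply: HB => [i | i]; first exact: Rle_trans (coord_le p i) p_r.
by rewrite leqNgt ltn_ord.
Qed.

Lemma convex_midpoint_lower p : 2 * H vzero - H (vscale (-1) p) <= H p.
Proof.
have half : 0 <= /2 <= 1 by lra.
have := H_conv p (vscale (-1) p) half.
have -> : vadd (vscale (/2) p) (vscale (1 - /2) (vscale (-1) p)) = vzero.
  by apply: functional_extensionality => i; rewrite /vadd /vscale /vzero; field.
lra.
Qed.

Hypothesis H_coer : one_coercive H.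

(* The affine functions p |-> v.p - H p are bounded above uniformly for v in
   a ball: far away coercivity dominates, nearby H is bounded below. *)
Lemma legendre_set_bound b : exists C, forall v p, vnorm v <= b -> dot v p - H p <= C.
Proof.
have [r far_growth] := H_coer b.
have [B HB] := convex_ball_bound (Rabs r).
exists (Rmax 0 (b * Rabs r - 2 * H vzero + B)) => v p v_b.
have := Rmax_l 0 (b * Rabs r - 2 * H vzero + B).
have := Rmax_r 0 (b * Rabs r - 2 * H vzero + B).
have b_ge0 : 0 <= b by have := vnorm_ge0 v; lra.
have dot_vp : dot v p <= b * vnorm p.
  apply: Rle_trans (dot_le v p) _.
  by apply: Rmult_le_compat_r; first exact: vnorm_ge0.
have [far | near] := Rle_lt_dec r (vnorm p); first by have := far_growth p far; lra.
have H_below := convex_midpoint_lower p.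
have H_opp : H (vscale (-1) p) <= B.
  apply: HB; rewrite vnorm_scale Rabs_Ropp Rabs_R1 Rmult_1_l.
  by have := Rle_abs r; lra.
have : b * vnorm p <= b * Rabs r.
  by apply: Rmult_le_compat_l => //; have := Rle_abs r; lra.
lra.
Qed.

(* The value of the Legendre transform, which is finite under (H1). *)
Definition legendre_val (v : vec n) : R :=
  match legendre H v with Some s => s | None => 0 end.

Lemma legendre_finite v : legendre H v = Some (legendre_val v) /\
  (forall p, dot v p - H p <= legendre_val v) /\
  (forall c, (forall p, dot v p - H p <= c) -> legendre_val v <= c).
Proof.
have bounded : bound (legendre_set H v).
  by have [C HC] := legendre_set_bound (vnorm v); exists C => r [p ->]; apply: HC; lra.
rewrite /legendre_val /legendre.
case: excluded_middle_informative => [bounded'|//].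
case: completeness => s [ub least] /=.
split; [by [] | split => [p | c Hc]]; first by apply: ub; exists p.
by apply: least => r [p ->]; apply: Hc.
Qed.

Lemma legendre_val_upper b : exists C, forall v, vnorm v <= b -> legendre_val v <= C.
Proof.
have [C HC] := legendre_set_bound b.
by exists C => v v_b; apply: (legendre_finite v).2.2 => p; apply: HC.
Qed.

(* Superlinear growth of H^*: if H <= B on the ball of radius M then
   H^*(w) >= M |w| - B, tested with p = M w / |w|. *)
Lemma legendre_val_lower M B w : 0 <= M -> (forall p, vnorm p <= M -> H p <= B) ->
  M * vnorm w - B <= legendre_val w.
Proof.
move=> M_ge0 HB; have affine_le := (legendre_finite w).2.1.
have [w_pos | w0] := Rle_lt_or_eq_dec 0 (vnorm w) (vnorm_ge0 w); last first.
  by have := affine_le vzero; have := HB vzero; rewrite vnorm_zero dot_zeror -w0; lra.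
set p := vscale (M / vnorm w) w.
have p_M : vnorm p = M.
  rewrite /p vnorm_scale Rabs_pos_eq; first by field; lra.
  by apply: Rmult_le_pos => //; apply/Rlt_le/Rinv_0_lt_compat.
have wp : dot w p = M * vnorm w by rewrite /p dot_scaler -vnorm_sq; field; lra.
by have := affine_le p; have := HB p (Req_le _ _ p_M); lra.
Qed.

End ConvexFunction.

Definition lipschitz_minorant n (J : vec n -> ereal) (x : vec n) (jx A L : R) : Prop :=
  forall y jy, J y = Some jy -> jx - A - L * vnorm (vsub y x) <= jy.

(* A convex lsc function has such a minorant around any point of its domain:
   J > J(x) - 1 on a ball of radius d around x by lower semicontinuity, and
   convexity along [x, y] propagates this bound with slope 2/d. *)
Lemma lsc_convex_minorant n (J : vec n -> ereal) x jx :
  convex_efun J -> lsc_efun J -> J x = Some jx ->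
  exists L, 0 <= L /\ lipschitz_minorant J x jx 1 L.
Proof.
move=> J_conv J_lsc Jx.
have [d [d_pos near_x]] : exists d, 0 < d /\
    forall y, vnorm (vsub y x) < d -> ~ ele (J y) (Some (jx - 1)).
  by apply: J_lsc; rewrite Jx /=; lra.
have slope_ge0 : 0 <= 2 / d by apply: Rmult_le_pos; [lra | apply/Rlt_le/Rinv_0_lt_compat].
exists (2 / d); split => // y jy Jy.
set D := vnorm (vsub y x).
have D_ge0 : 0 <= D by apply: vnorm_ge0.
have [D_small | D_large] := Rlt_le_dec D d.
  by have := near_x y D_small; rewrite Jy /= => ?; have := Rmult_le_pos _ _ slope_ge0 D_ge0; lra.
set l := d / (2 * D).
have l_pos : 0 < l by apply: Rdiv_lt_0_compat; lra.
have l_le1 : l <= 1.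
  by apply: (Rmult_le_reg_r (2 * D)); [lra | rewrite /l /Rdiv Rmult_assoc Rinv_l; lra].
set z := vadd (vscale l y) (vscale (1 - l) x).
have z_near : vnorm (vsub z x) < d.
  have -> : vsub z x = vscale l (vsub y x).
    by apply: functional_extensionality => i; rewrite /z /vsub /vadd /vscale; ring.
  rewrite vnorm_scale Rabs_pos_eq -/D; last lra.
  have : l * D = d / 2 by rewrite /l; field; lra.
  lra.
have := J_conv y x l (conj (Rlt_le _ _ l_pos) l_le1).
have := near_x z z_near; rewrite -/z Jy Jx.
case: (J z) => [jz|] //= jz_gt Jz_le.
(* jx - 1 < J(z) <= l jy + (1 - l) jx, and l (2/d) D = 1. *)
have l_slope : l * (2 / d * D) = 1 by rewrite /l; field; lra.
have : 0 < l * (jy - jx + 2 / d * D) by lra.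
nra.
Qed.

Lemma subgrad_minorant n (J : vec n -> ereal) x jx p :
  J x = Some jx -> subgrad J x p -> lipschitz_minorant J x jx 0 (vnorm p).
Proof.
move=> Jx [jx' [Jx' supporting]] y jy Jy.
move: Jx' supporting; rewrite Jx => -[<-] supporting.
have := supporting y; rewrite Jy /= => affine_le.
have := dot_le (vscale (-1) p) (vsub y x).
by rewrite dot_scale vnorm_scale Rabs_Ropp Rabs_R1; lra.
Qed.

Lemma cv0_of_scaled_bounds (a : nat -> R) c : (forall k, 0 <= a k) ->
  (forall K, 0 < K -> exists s, Un_cv s c /\ forall k, K * a k <= s k) ->
  Un_cv a 0.
Proof.
move=> a_ge0 scaled eps eps_pos.
set K := 2 * (Rabs c + 1) / eps.
have K_pos : 0 < K by apply: Rdiv_lt_0_compat => //; have := Rabs_pos c; lra.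
have [s [s_cv s_ge]] := scaled K K_pos.
have [N0 close] := s_cv 1 Rlt_0_1.
exists N0 => k k_ge; rewrite /Rdist Rminus_0_r Rabs_pos_eq //.
have := close k k_ge; rewrite /Rdist => s_near.
have : s k <= Rabs c + 1.
  by have := Rle_abs (s k - c); have := Rle_abs c; lra.
have := s_ge k; have : K * eps = 2 * (Rabs c + 1) by rewrite /K; field; lra.
have := a_ge0 k; have := Rabs_pos c; nra.
Qed.

(* The reciprocals of a nonvanishing sequence with a nonzero limit are bounded:
   eventually |a_k| >= |l|/2, and finitely many terms remain. *)
Lemma inv_bounded (a : nat -> R) l : Un_cv a l -> l <> 0 -> (forall k, a k <> 0) ->
  exists B, forall k, Rabs (/ a k) <= B.
Proof.
move=> a_cv l_nz a_nz.
have l_pos : 0 < Rabs l by apply: Rabs_pos_lt.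
have [N0 close] := a_cv (Rabs l / 2) ltac:(lra).
exists (2 / Rabs l + \rsum_(k < N0) Rabs (/ a k)) => k.
have early_ge0 : 0 <= \rsum_(k < N0) Rabs (/ a k) by apply: rsum_ge0 => i; apply: Rabs_pos.
have late_ge0 : 0 <= 2 / Rabs l by apply: Rlt_le; apply: Rdiv_lt_0_compat; lra.
have [k_early | k_late] := ltnP k N0.
  by have := rsum_term_le (F := fun i : 'I_N0 => Rabs (/ a i)) (Ordinal k_early)
    (fun _ => Rabs_pos _); rewrite /=; lra.
have := close k (elimT leP k_late); rewrite /Rdist Rabs_minus_sym => near_l.
have ak_ge : Rabs l / 2 <= Rabs (a k).
  have := Rabs_triang (l - a k) (a k).
  have -> : l - a k + a k = l by ring.
  lra.
rewrite Rabs_inv.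
have : / Rabs (a k) <= / (Rabs l / 2) by apply: Rinv_le_contravar; lra.
have -> : / (Rabs l / 2) = 2 / Rabs l by field; lra.
lra.
Qed.

Lemma weighted_sum_cv m (w : 'I_m -> nat -> R) (lim : 'I_m -> R) (D : 'I_m -> R) j d :
  (forall i, Un_cv (w i) (lim i)) ->
  Un_cv (fun k => \rsum_(i < m) w i k * D i + w j k * d)
        (\rsum_(i < m) lim i * D i + lim j * d).
Proof.
move=> w_cv; apply: CV_plus; last by apply: CV_mult; [apply: w_cv | apply: cv_const].
by apply: (@rsum_cv m (fun i k => w i k * D i)) => i; apply: CV_mult; [apply: w_cv | apply: cv_const].
Qed.

Section LaxMinimizers.
Variables (n m : nat) (H : 'I_m -> vec n -> R) (J : vec n -> ereal).
Hypothesis H_conv : forall i, convex_fun (H i).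
Hypothesis H_coer : forall i, one_coercive (H i).

Lemma lax_obj_finite y (s : 'I_m -> R) (w : 'I_m -> vec n) :
  lax_obj J H y s w = eadd (J (vsub y (vsum w)))
    (Some (\rsum_(i < m) s i * legendre_val (H i) (vscale (/ s i) (w i)))).
Proof.
rewrite /lax_obj /esum; congr eadd.
rewrite (big_morph Some (op1 := eadd) (op2 := Rplus) (id2 := 0) (fun _ _ => erefl) erefl).
by apply: eq_bigr => i _; rewrite (legendre_finite (H_conv i) (H_coer i) _).1.
Qed.

Variables (x : vec n) (jx : R) (t : 'I_m -> nat -> R) (v : 'I_m -> nat -> vec n).
Variables (xk : nat -> vec n) (u : 'I_m -> nat -> vec n).
Hypothesis Jx : J x = Some jx.
Hypothesis t_pos : forall i k, 0 < t i k.
Hypothesis xk_def : forall k, xk k = vadd x (vsum (fun i => vscale (t i k) (v i k))).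
Hypothesis u_min : forall k, lax_minimizer J H (xk k) (fun i => t i k) (fun i => u i k).

(* Minimality against the competitor w_i = t_i v_i, for which x_k - sum w_i = x. *)
Lemma lax_compare_competitor k : exists jy,
  J (vsub (xk k) (vsum (fun i => u i k))) = Some jy /\
  jy + \rsum_(i < m) t i k * legendre_val (H i) (vscale (/ t i k) (u i k)) <=
  jx + \rsum_(i < m) t i k * legendre_val (H i) (v i k).
Proof.
set w := fun i => vscale (t i k) (v i k).
have w_v : forall i, vscale (/ t i k) (w i) = v i k.
  move=> i; apply: functional_extensionality => c; rewrite /w /vscale.
  by field; have := t_pos i k; lra.
have := u_min k w; rewrite !lax_obj_finite.
have -> : vsub (xk k) (vsum w) = x.
  by rewrite xk_def; apply: functional_extensionality => c; rewrite /vsub /vadd /w; ring.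
under [in X in ele _ X]eq_bigr => i _ do rewrite w_v.
rewrite Jx.
by case: (J _) => [jy|] //= le; exists jy.
Qed.

Lemma lax_displacement k :
  vnorm (vsub (vsub (xk k) (vsum (fun i => u i k))) x) <=
  \rsum_(i < m) (t i k * vnorm (v i k) + vnorm (u i k)).
Proof.
have -> : vsub (vsub (xk k) (vsum (fun i => u i k))) x =
          vsum (fun i => vsub (vscale (t i k) (v i k)) (u i k)).
  rewrite xk_def; apply: functional_extensionality => c.
  by rewrite /vsub /vadd /vsum /vscale rsum_sub; ring.
apply: Rle_trans (vsum_norm _) _; apply: rsum_le => i.
apply: Rle_trans (vnorm_sub _ _) _.
by rewrite vnorm_scale Rabs_pos_eq; [lra | apply: Rlt_le].
Qed.

Hypothesis v_bounded : forall i, vec_bounded (v i).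

(* It combines the
   comparison with the competitor, the growth of H_i^*, and the displacement
   bound inserted into the minorant of J. *)
Lemma lax_energy_estimate A L : 0 <= L -> lipschitz_minorant J x jx A L ->
  exists E : 'I_m -> R, forall M B : 'I_m -> R, (forall i, 0 <= M i) ->
    (forall i p, vnorm p <= M i -> H i p <= B i) -> forall k,
    \rsum_(i < m) (M i - L) * vnorm (u i k) <= A + \rsum_(i < m) t i k * (E i + B i).
Proof.
move=> L_ge0 minor.
have [V V_bound] := choice (fun i b => forall k, vnorm (v i k) <= b) v_bounded.
have C_exists : forall i, exists c, forall k, legendre_val (H i) (v i k) <= c.
  move=> i; have [c Hc] := legendre_val_upper (H_conv i) (H_coer i) (V i).
  by exists c => k; apply: Hc; apply: V_bound.
have [C C_bound] := choice _ C_exists.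
exists (fun i => C i + L * V i) => M B M_ge0 B_bound k.
have [jy [Jy compare]] := lax_compare_competitor k.
have J_lower := minor _ _ Jy.
have shift := Rmult_le_compat_l L _ _ L_ge0 (lax_displacement k).
have growth : \rsum_(i < m) (M i * vnorm (u i k) - t i k * B i) <=
    \rsum_(i < m) t i k * legendre_val (H i) (vscale (/ t i k) (u i k)).
  apply: rsum_le => i; have t_ik := t_pos i k.
  have := legendre_val_lower (H_conv i) (H_coer i) (vscale (/ t i k) (u i k)) (M_ge0 i) (B_bound i).
  rewrite vnorm_scale Rabs_pos_eq; last by apply/Rlt_le/Rinv_0_lt_compat.
  move=> /(Rmult_le_compat_l (t i k) _ _ (Rlt_le _ _ t_ik)).
  have -> : t i k * (M i * (/ t i k * vnorm (u i k)) - B i) =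
            M i * vnorm (u i k) - t i k * B i by field; lra.
  by [].
have competitor : \rsum_(i < m) t i k * legendre_val (H i) (v i k) <=
                  \rsum_(i < m) t i k * C i.
  by apply: rsum_le => i; apply: Rmult_le_compat_l; [apply/Rlt_le/t_pos | apply: C_bound].
have split_sum :
  \rsum_(i < m) (M i - L) * vnorm (u i k) - \rsum_(i < m) t i k * (C i + L * V i + B i) =
  \rsum_(i < m) (M i * vnorm (u i k) - t i k * B i)
  - L * (\rsum_(i < m) (t i k * vnorm (v i k) + vnorm (u i k)))
  - \rsum_(i < m) t i k * C i
  - L * (\rsum_(i < m) t i k * (V i - vnorm (v i k))).
  rewrite !big_distrr -!rsum_sub /=; apply: eq_bigr => i _; ring.
have V_slack : 0 <= L * (\rsum_(i < m) t i k * (V i - vnorm (v i k))).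
  apply: Rmult_le_pos => //; apply: rsum_ge0 => i.
  by apply: Rmult_le_pos; [apply/Rlt_le/t_pos | have := V_bound i k; lra].
lra.
Qed.

(* Isolating the j-th component: take M_j = L + K and M_i = L otherwise;
   only the constant attached to index j depends on K. *)
Lemma lax_coordinate_estimate A L j : 0 <= L -> lipschitz_minorant J x jx A L ->
  exists D : 'I_m -> R, forall K, 0 <= K -> exists d, forall k,
    K * vnorm (u j k) <= A + (\rsum_(i < m) t i k * D i + t j k * d).
Proof.
move=> L_ge0 minor.
have [E estimate] := lax_energy_estimate L_ge0 minor.
have [B0 B0_bound] := choice (fun i b => forall p, vnorm p <= L -> H i p <= b)
  (fun i => convex_ball_bound (H_conv i) L).
exists (fun i => Rabs (E i + B0 i)) => K K_ge0.
have [Bj Bj_bound] := convex_ball_bound (H_conv j) (L + K).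
exists (Rabs (E j + Bj)) => k.
pose M i := if i == j then L + K else L.
pose B i := if i == j then Bj else B0 i.
have M_ge0 : forall i, 0 <= M i by move=> i; rewrite /M; case: (i == j); lra.
have B_bound : forall i p, vnorm p <= M i -> H i p <= B i.
  by move=> i p; rewrite /M /B; case: eqP => [->|_]; [apply: Bj_bound | apply: B0_bound].
have := estimate M B M_ge0 B_bound k; rewrite /M /B.
have -> : \rsum_(i < m) ((if i == j then L + K else L) - L) * vnorm (u i k) =
          K * vnorm (u j k).
  rewrite (eq_bigr (fun i => if i == j then K * vnorm (u i k) else 0)).
    by rewrite -big_mkcond big_pred1_eq.
  by move=> i _; case: eqP => _; ring.
have : \rsum_(i < m) t i k * (E i + (if i == j then Bj else B0 i)) <=
       \rsum_(i < m) (t i k * Rabs (E i + B0 i) +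
                      (if i == j then t i k * Rabs (E j + Bj) else 0)).
  apply: rsum_le => i; have := t_pos i k; case: eqP => [->|_].
    by have := Rle_abs (E j + Bj); have := Rabs_pos (E j + B0 j); nra.
  by have := Rle_abs (E i + B0 i); nra.
by rewrite big_split /= -big_mkcond big_pred1_eq; lra.
Qed.

Lemma lax_minimizers_vanish j : convex_efun J -> lsc_efun J ->
  (forall i, Un_cv (t i) 0) -> vec_cv (u j) vzero.
Proof.
move=> J_conv J_lsc t_cv.
have [L [L_ge0 minor]] := lsc_convex_minorant J_conv J_lsc Jx.
have [D estimate] := lax_coordinate_estimate j L_ge0 minor.
rewrite /vec_cv (_ : (fun k => _) = fun k => vnorm (u j k)); last first.
  by apply: functional_extensionality => k; rewrite vsub_zero.
apply: (@cv0_of_scaled_bounds _ 1) => [k | K K_pos]; first exact: vnorm_ge0.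
have [d bound] := estimate K (Rlt_le _ _ K_pos).
exists (fun k => 1 + (\rsum_(i < m) t i k * D i + t j k * d)); split => //.
have := CV_plus _ _ _ _ (cv_const 1) (weighted_sum_cv (lim := fun _ => 0) D j d t_cv).
have -> : \rsum_(i < m) 0 * D i + 0 * d = 0 by rewrite big1 => [|i _]; ring.
by rewrite Rplus_0_r.
Qed.

Variables (r : 'I_m) (alpha : 'I_m -> R).
Hypothesis alpha_cv : forall i, Un_cv (fun k => t i k / t r k) (alpha i).

(* With a subgradient at x the minorant has A = 0, and dividing by t_r
   expresses the estimate through the ratios t_i / t_r. *)
Lemma lax_rate_estimate p j : subgrad J x p ->
  exists D : 'I_m -> R, forall K, 0 <= K -> exists d, forall k,
    K * (vnorm (u j k) / t r k) <=
    \rsum_(i < m) t i k / t r k * D i + t j k / t r k * d.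
Proof.
move=> p_sub.
have [D estimate] := lax_coordinate_estimate j (vnorm_ge0 p) (subgrad_minorant Jx p_sub).
exists D => K K_ge0; have [d bound] := estimate K K_ge0; exists d => k.
have t_rk := Rinv_0_lt_compat _ (t_pos r k).
have := Rmult_le_compat_r (/ t r k) _ _ (Rlt_le _ _ t_rk) (bound k).
rewrite Rplus_0_l Rmult_plus_distr_r big_distrl /=.
rewrite (eq_bigr (fun i => t i k / t r k * D i)) => [|i _]; last by rewrite /Rdiv; ring.
by rewrite /Rdiv; lra.
Qed.

Lemma lax_minimizers_rate p j : subgrad J x p -> alpha j = 0 ->
  vec_cv (fun k => vscale (/ t r k) (u j k)) vzero.
Proof.
move=> p_sub alpha_j0.
have [D estimate] := lax_rate_estimate j p_sub.
rewrite /vec_cv (_ : (fun k => _) = fun k => vnorm (u j k) / t r k); last first.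
  apply: functional_extensionality => k; rewrite vsub_zero vnorm_scale Rabs_pos_eq.
    by rewrite /Rdiv Rmult_comm.
  exact/Rlt_le/Rinv_0_lt_compat/t_pos.
apply: (@cv0_of_scaled_bounds _ (\rsum_(i < m) alpha i * D i)) => [k | K K_pos].
  by apply: Rmult_le_pos; [apply: vnorm_ge0 | apply/Rlt_le/Rinv_0_lt_compat/t_pos].
have [d bound] := estimate K (Rlt_le _ _ K_pos).
exists (fun k => \rsum_(i < m) t i k / t r k * D i + t j k / t r k * d); split => //.
by have := weighted_sum_cv D j d alpha_cv; rewrite alpha_j0 Rmult_0_l Rplus_0_r.
Qed.

Lemma lax_minimizers_bounded_rate p j : subgrad J x p -> alpha j <> 0 ->
  vec_bounded (fun k => vscale (/ t j k) (u j k)).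
Proof.
move=> p_sub alpha_j_nz.
have [D estimate] := lax_rate_estimate j p_sub.
have [d bound] := estimate 1 Rle_0_1.
have [S [_ S_bound]] := maj_by_pos _ (exist _ _ (weighted_sum_cv D j d alpha_cv)).
have ratio_nz : forall k, t j k / t r k <> 0.
  by move=> k; apply: Rgt_not_eq; apply: Rdiv_lt_0_compat; apply: t_pos.
have [I I_bound] := inv_bounded (alpha_cv j) alpha_j_nz ratio_nz.
exists (S * I) => k.
have t_jk := t_pos j k; have t_rk := t_pos r k.
rewrite vnorm_scale Rabs_pos_eq; last exact/Rlt_le/Rinv_0_lt_compat.
have -> : / t j k * vnorm (u j k) = vnorm (u j k) / t r k * / (t j k / t r k).
  by field; lra.
apply: Rle_trans (Rle_abs _) _; rewrite Rabs_mult.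
apply: Rmult_le_compat; [exact: Rabs_pos | exact: Rabs_pos | | exact: I_bound].
have rate_ge0 : 0 <= vnorm (u j k) / t r k.
  by apply: Rmult_le_pos; [apply: vnorm_ge0 | apply/Rlt_le/Rinv_0_lt_compat].
rewrite Rabs_pos_eq //; apply: Rle_trans (S_bound k).
by have := bound k; rewrite Rmult_1_l => ?; apply: Rle_trans (Rle_abs _).
Qed.

End LaxMinimizers.

Unset Implicit Arguments.

(* The paper's indices j = 1..N are 'I_N.+1 here, index 1 being ord0. *)
Theorem proposition3p3 (n N : nat)
  (H : 'I_N.+1 -> vec n -> R) (J : vec n -> ereal)
  (HH_conv : forall j, convex_fun (H j))
  (HH_coer : forall j, one_coercive (H j))
  (HH_strict : exists j, strictly_convex_fun (H j))
  (HJ_proper : proper_fun J) (HJ_conv : convex_efun J) (HJ_lsc : lsc_efun J)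
  (x : vec n) (t : 'I_N.+1 -> nat -> R) (v : 'I_N.+1 -> nat -> vec n)
  (vinf : 'I_N.+1 -> vec n) (alpha : 'I_N.+1 -> R)
  (Ht_pos : forall j k, 0 < t j k)
  (Ht_cv : forall j, Un_cv (t j) 0)
  (Hv_cv : forall j, vec_cv (v j) (vinf j))
  (Halpha : forall j, Un_cv (fun k => t j k / t ord0 k) (alpha j))
  (xk : nat -> vec n)
  (Hxk : forall k, xk k = vadd x (vsum (fun j => vscale (t j k) (v j k))))
  (Hx : dom J x)
  (ubar : 'I_N.+1 -> nat -> vec n)
  (Hmin : forall k, lax_minimizer J H (xk k) (fun j => t j k) (fun j => ubar j k)) :
  (forall j, vec_cv (ubar j) vzero) /\
  (forall j, subdiff_nonempty J x -> alpha j = 0 ->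
     vec_cv (fun k => vscale (/ t ord0 k) (ubar j k)) vzero) /\
  (forall j, subdiff_nonempty J x -> alpha j <> 0 ->
     vec_bounded (fun k => vscale (/ t j k) (ubar j k))).
Proof.
case Jx: (J x) Hx => [jx|] // _.
have v_bounded j : vec_bounded (v j) := vec_cv_bounded (Hv_cv j).
split; [|split] => j.
- exact: (lax_minimizers_vanish (u := ubar) HH_conv HH_coer Jx Ht_pos Hxk Hmin
    v_bounded j HJ_conv HJ_lsc Ht_cv).
- move=> [p p_sub]; exact: (lax_minimizers_rate (u := ubar) HH_conv HH_coer Jx
    Ht_pos Hxk Hmin v_bounded Halpha p_sub).
- move=> [p p_sub]; exact: (lax_minimizers_bounded_rate (u := ubar) HH_conv HH_coer
    Jx Ht_pos Hxk Hmin v_bounded Halpha p_sub).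
Qed.
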